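(* Let $P=(X,D,C)$ be a St-CSP and suppose $(C,\emptyset)\rightsquigarrow\cdots\rightsquigarrow(C_0,C_1)$ by applications of rules (R1)–(R3), introducing the set $Y$ of auxiliary variables. Let $P'$ be the St-CSP with variables $X\cup Y$, the same domains as $P$ on $X$, domain $\mathbb{Z}^\omega$ (all integer streams) for each variable in $Y$, and constraint set $C_0\cup C_1$. Then an assignment $A$ of the variables $X$ is a solution of $P$ if and only if $A$ extends to a solution of $P'$; that is, $sol(P)$ equals the projection of $sol(P')$ onto $X$.
   Context: Streams are functions $\mathbb{N}_0\to\mathbb{Z}$; for a finite alphabet $\Sigma$, $\Sigma^\omega$ is the set of streams with values in $\Sigma$. A St-CSP is a triple $(X,D,C)$ with a finite set $X$ of stream variables, domains $D(x)=\Sigma(x)^\omega$, and a finite set $C$ of stream constraints; $sol(P)$ is the set of assignments of streams in the domains to the variables satisfying all constraints. Stream expressions are built from stream variables and constant streams using pointwise operators (arithmetic, relational operators returning $0/1$ streams, Boolean and/or/not, if-then-else, each applied pointwise via fixed total functions on integers) and the temporal operators $\mathtt{first}$ ($(\mathtt{first}\,a)(i)=a(0)$), $\mathtt{next}$ ($(\mathtt{next}\,a)(i)=a(i+1)$) and $\mathtt{fby}$ ($(a\ \mathtt{fby}\ b)(0)=a(0)$, $(a\ \mathtt{fby}\ b)(i)=b(i-1)$ for $i\ge1$). A stream constraint is one of: $e_1\,R\,e_2$ with $R\in\{<,\le,==,\ge,>,\ne\}$ (satisfied iff $R$ holds at every time point), $e_1\ \mathtt{->}\ e_2$ (satisfied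 iff for all $i$, $e_1(i)\ne0$ implies $e_2(i)\ne0$), or $e_1\ \mathtt{until}\ e_2$ (satisfied iff there is $i\ge0$ with $e_1(j)\ne0$ for all $j<i$ and $e_2(i)\ne0$); $\mathtt{until}$ occurs only as the outermost constructor. A constraint context $c[\_]$ is a constraint with one expression occurrence replaced by a placeholder; $c[e]$ denotes substitution. The rewriting rules on pairs $(C_0,C_1)$ of constraint sets are (all $x_k$ fresh variables): (R1) $(C_0\cup\{c[\mathtt{next}\ e]\},C_1)\rightsquigarrow(C_0\cup\{c[x_1],\ x_2==e\},\ C_1\cup\{x_1==\mathtt{next}\ x_2\})$; (R2) $(C_0\cup\{c[e_1\ \mathtt{fby}\ e_2]\},C_1)\rightsquigarrow(C_0\cup\{c[x_1],\ x_2==e_1,\ x_3==e_2\},\ C_1\cup\{\mathtt{first}\ x_1==\mathtt{first}\ x_2,\ x_3==\mathtt{next}\ x_1\})$; (R3) $(C_0\cup\{e_1\ \mathtt{until}\ e_2\},C_1)\rightsquigarrow(C_0\cup\{x_1==e_1,\ x_2==e_2\},\ C_1\cup\{x_1\ \mathtt{until}\ x_2\})$. *)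

From Stdlib Require Import ZArith List Relations.
Import ListNotations.
Open Scope Z_scope.

Definition stream := nat -> Z.

Definition var := nat.

(** Pointwise operators are applied via fixed total
    functions on integers (unary, binary); if-then-else is pointwise
    (condition nonzero = true). *)
Inductive expr : Type :=
| EVar   : var -> expr
| EConst : Z -> expr
| EUn    : (Z -> Z) -> expr -> expr
| EBin   : (Z -> Z -> Z) -> expr -> expr -> expr
| EIte   : expr -> expr -> expr -> expr
| EFirst : expr -> expr
| ENext  : expr -> expr
| EFby   : expr -> expr -> expr.

Inductive relop : Type := RLt | RLe | REq | RGe | RGt | RNe.

Definition rel_holds (R : relop) (a b : Z) : Prop :=
  match R with
  | RLt => a < b | RLe => a <= b | REq => a = b
  | RGe => a >= b | RGt => a > b | RNe => a <> b
  end.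

(** Stream constraints ([until] is only outermost, by construction). *)
Inductive constr : Type :=
| CRel   : relop -> expr -> expr -> constr
| CImp   : expr -> expr -> constr
| CUntil : expr -> expr -> constr.

(** Assignments (total; only values on the relevant variables matter). *)
Definition assignment := var -> stream.

Fixpoint eval (A : assignment) (e : expr) : stream :=
  match e with
  | EVar x => A x
  | EConst c => fun _ => c
  | EUn f e1 => fun i => f (eval A e1 i)
  | EBin f e1 e2 => fun i => f (eval A e1 i) (eval A e2 i)
  | EIte e1 e2 e3 => fun i => if Z.eqb (eval A e1 i) 0 then eval A e3 i else eval A e2 i
  | EFirst e1 => fun _ => eval A e1 0%nat
  | ENext e1 => fun i => eval A e1 (S i)
  | EFby e1 e2 => fun i => match i with O => eval A e1 0%nat | S j => eval A e2 j end
  end.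

Definition sat (A : assignment) (c : constr) : Prop :=
  match c with
  | CRel R e1 e2 => forall i, rel_holds R (eval A e1 i) (eval A e2 i)
  | CImp e1 e2 => forall i, eval A e1 i <> 0 -> eval A e2 i <> 0
  | CUntil e1 e2 => exists i, (forall j, (j < i)%nat -> eval A e1 j <> 0) /\ eval A e2 i <> 0
  end.

Fixpoint vars_expr (e : expr) : list var :=
  match e with
  | EVar x => [x]
  | EConst _ => []
  | EUn _ e1 | EFirst e1 | ENext e1 => vars_expr e1
  | EBin _ e1 e2 | EFby e1 e2 => vars_expr e1 ++ vars_expr e2
  | EIte e1 e2 e3 => vars_expr e1 ++ vars_expr e2 ++ vars_expr e3
  end.

Definition vars_constr (c : constr) : list var :=
  match c with
  | CRel _ e1 e2 | CImp e1 e2 | CUntil e1 e2 => vars_expr e1 ++ vars_expr e2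
  end.

Definition vars_constrs (C : list constr) : list var := flat_map vars_constr C.

Inductive ectx : Type :=
| KHole  : ectx
| KUn    : (Z -> Z) -> ectx -> ectx
| KBinL  : (Z -> Z -> Z) -> ectx -> expr -> ectx
| KBinR  : (Z -> Z -> Z) -> expr -> ectx -> ectx
| KIte1  : ectx -> expr -> expr -> ectx
| KIte2  : expr -> ectx -> expr -> ectx
| KIte3  : expr -> expr -> ectx -> ectx
| KFirst : ectx -> ectx
| KNext  : ectx -> ectx
| KFbyL  : ectx -> expr -> ectx
| KFbyR  : expr -> ectx -> ectx.

Fixpoint eplug (k : ectx) (e : expr) : expr :=
  match k with
  | KHole => e
  | KUn f k1 => EUn f (eplug k1 e)
  | KBinL f k1 e2 => EBin f (eplug k1 e) e2
  | KBinR f e1 k2 => EBin f e1 (eplug k2 e)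
  | KIte1 k1 e2 e3 => EIte (eplug k1 e) e2 e3
  | KIte2 e1 k2 e3 => EIte e1 (eplug k2 e) e3
  | KIte3 e1 e2 k3 => EIte e1 e2 (eplug k3 e)
  | KFirst k1 => EFirst (eplug k1 e)
  | KNext k1 => ENext (eplug k1 e)
  | KFbyL k1 e2 => EFby (eplug k1 e) e2
  | KFbyR e1 k2 => EFby e1 (eplug k2 e)
  end.

Inductive cctx : Type :=
| CKRelL   : relop -> ectx -> expr -> cctx
| CKRelR   : relop -> expr -> ectx -> cctx
| CKImpL   : ectx -> expr -> cctx
| CKImpR   : expr -> ectx -> cctx
| CKUntilL : ectx -> expr -> cctx
| CKUntilR : expr -> ectx -> cctx.

Definition cplug (c : cctx) (e : expr) : constr :=
  match c with
  | CKRelL R k e2 => CRel R (eplug k e) e2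
  | CKRelR R e1 k => CRel R e1 (eplug k e)
  | CKImpL k e2 => CImp (eplug k e) e2
  | CKImpR e1 k => CImp e1 (eplug k e)
  | CKUntilL k e2 => CUntil (eplug k e) e2
  | CKUntilR e1 k => CUntil e1 (eplug k e)
  end.

Definition ceq (e1 e2 : expr) : constr := CRel REq e1 e2.

Record rstate := RS { st_C0 : list constr; st_C1 : list constr; st_Y : list var }.

Definition fresh (X : list var) (s : rstate) (x : var) : Prop :=
  ~ In x X /\ ~ In x (st_Y s) /\
  ~ In x (vars_constrs (st_C0 s)) /\ ~ In x (vars_constrs (st_C1 s)).

(** One rewriting step (R1)-(R3); "C0 ∪ {c}" is modelled by picking one
    occurrence of c in the list C0 (= l1 ++ c :: l2) and removing it. *)
Inductive rstep (X : list var) : rstate -> rstate -> Prop :=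
| R1 : forall l1 l2 C1 Y (c : cctx) (e : expr) (x1 x2 : var),
    let s := RS (l1 ++ cplug c (ENext e) :: l2) C1 Y in
    fresh X s x1 -> fresh X s x2 -> x1 <> x2 ->
    rstep X s
      (RS (cplug c (EVar x1) :: ceq (EVar x2) e :: l1 ++ l2)
          (ceq (EVar x1) (ENext (EVar x2)) :: C1)
          (x1 :: x2 :: Y))
| R2 : forall l1 l2 C1 Y (c : cctx) (e1 e2 : expr) (x1 x2 x3 : var),
    let s := RS (l1 ++ cplug c (EFby e1 e2) :: l2) C1 Y in
    fresh X s x1 -> fresh X s x2 -> fresh X s x3 ->
    x1 <> x2 -> x1 <> x3 -> x2 <> x3 ->
    rstep X s
      (RS (cplug c (EVar x1) :: ceq (EVar x2) e1 :: ceq (EVar x3) e2 :: l1 ++ l2)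
          (ceq (EFirst (EVar x1)) (EFirst (EVar x2))
             :: ceq (EVar x3) (ENext (EVar x1)) :: C1)
          (x1 :: x2 :: x3 :: Y))
| R3 : forall l1 l2 C1 Y (e1 e2 : expr) (x1 x2 : var),
    let s := RS (l1 ++ CUntil e1 e2 :: l2) C1 Y in
    fresh X s x1 -> fresh X s x2 -> x1 <> x2 ->
    rstep X s
      (RS (ceq (EVar x1) e1 :: ceq (EVar x2) e2 :: l1 ++ l2)
          (CUntil (EVar x1) (EVar x2) :: C1)
          (x1 :: x2 :: Y)).

Definition rsteps (X : list var) : rstate -> rstate -> Prop :=
  clos_refl_trans rstate (rstep X).

(** A St-CSP (X, D, C): variables X, domain Sigma(x)^omega given by a finite
    alphabet D x (a list of integers), and constraints C over X. *)
Record stcsp := StCSP {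
  csp_X : list var;
  csp_D : var -> list Z;
  csp_C : list constr }.

Definition well_formed (P : stcsp) : Prop :=
  forall x, In x (vars_constrs (csp_C P)) -> In x (csp_X P).

Definition in_domain (alphabet : list Z) (s : stream) : Prop :=
  forall i, In (s i) alphabet.

Definition is_sol (P : stcsp) (A : assignment) : Prop :=
  (forall x, In x (csp_X P) -> in_domain (csp_D P x) (A x)) /\
  (forall c, In c (csp_C P) -> sat A c).

(** P' : variables X ∪ Y, domains of P on X, Z^omega on Y (i.e. no domain
    restriction), constraints C0 ∪ C1. *)
Definition is_sol_P' (P : stcsp) (Y : list var) (C : list constr) (A : assignment) : Prop :=
  (forall x, In x (csp_X P) -> in_domain (csp_D P x) (A x)) /\
  (forall c, In c C -> sat A c).

(* Each rule replaces one constraint by a few constraints that name some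
   subexpressions by fresh variables.  Any assignment satisfying the new
   constraints satisfies the old one, because every named variable evaluates
   to the stream of the subexpression it names; conversely, any solution of
   the old constraint extends to the new ones by assigning to each fresh
   variable exactly that stream, which changes nothing on the old variables. *)

From Stdlib Require Import List PeanoNat.
Import ListNotations.

Lemma eval_agree A B e :
  (forall x, In x (vars_expr e) -> A x = B x) -> forall i, eval A e i = eval B e i.
Proof.
  induction e as [x | z | f e IH | f e1 IH1 e2 IH2 | e1 IH1 e2 IH2 e3 IH3
                 | e IH | e IH | e1 IH1 e2 IH2]; simpl; intros H i.
  - rewrite H; auto.
  - reflexivity.
  - rewrite IH; auto.
  - rewrite IH1, IH2; auto; intros y Hy; apply H, in_or_app; auto.
  - rewrite IH1, IH2, IH3; auto; intros y Hy; apply H; rewrite !in_app_iff; auto.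
  - rewrite IH; auto.
  - rewrite IH; auto.
  - destruct i; [rewrite IH1 | rewrite IH2]; auto; intros y Hy; apply H, in_or_app; auto.
Qed.

Lemma sat_agree A B c :
  (forall x, In x (vars_constr c) -> A x = B x) -> sat A c -> sat B c.
Proof.
  destruct c as [R e1 e2 | e1 e2 | e1 e2]; simpl; intros H Hc;
    assert (H1 : forall i, eval A e1 i = eval B e1 i)
      by (apply eval_agree; intros; apply H, in_or_app; tauto);
    assert (H2 : forall i, eval A e2 i = eval B e2 i)
      by (apply eval_agree; intros; apply H, in_or_app; tauto).
  - intro i; rewrite <- H1, <- H2; auto.
  - intro i; rewrite <- H1, <- H2; auto.
  - destruct Hc as [i [Hbefore Hat]]; exists i; rewrite <- H2; split; auto.
    intros j Hj; rewrite <- H1; auto.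
Qed.

Lemma Forall_sat_agree A B L :
  (forall x, In x (vars_constrs L) -> A x = B x) ->
  Forall (sat A) L -> Forall (sat B) L.
Proof.
  intros H HL; rewrite Forall_forall in *; intros c Hc.
  apply (sat_agree A); auto.
  intros x Hx; apply H, in_flat_map; eauto.
Qed.

Lemma eplug_ext A k e e' :
  (forall i, eval A e i = eval A e' i) ->
  forall i, eval A (eplug k e) i = eval A (eplug k e') i.
Proof.
  intros H; induction k; simpl; intros i; rewrite ?IHk; auto.
  all: destruct i; rewrite ?IHk; auto.
Qed.

Lemma sat_cplug_iff A c e e' :
  (forall i, eval A e i = eval A e' i) -> sat A (cplug c e) <-> sat A (cplug c e').
Proof.
  assert (Himp : forall e e', (forall i, eval A e i = eval A e' i) ->
                   sat A (cplug c e) -> sat A (cplug c e')).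
  { intros e0 e0' H; destruct c as [R k e2 | R e1 k | k e2 | e1 k | k e2 | e1 k];
      pose proof (eplug_ext A k e0 e0' H) as Hk; simpl; intros Hc.
    1-4: intro i; rewrite <- Hk; auto.
    all: destruct Hc as [i [Hbefore Hat]]; exists i; split; auto;
         try (intros j Hj); rewrite <- Hk; auto. }
  split; apply Himp; auto.
Qed.

Lemma vars_cplug c e x : In x (vars_expr e) -> In x (vars_constr (cplug c e)).
Proof.
  assert (Hk : forall k, In x (vars_expr e) -> In x (vars_expr (eplug k e)))
    by (induction k; simpl; intros; rewrite ?in_app_iff; auto).
  destruct c; simpl; intros; rewrite in_app_iff; auto.
Qed.

Definition upd (B : assignment) (x : var) (s : stream) : assignment :=
  fun y => if Nat.eqb y x then s else B y.

Lemma upd_same B x s : upd B x s x = s.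
Proof. unfold upd; rewrite Nat.eqb_refl; auto. Qed.

Lemma upd_other B x s y : y <> x -> upd B x s y = B y.
Proof. unfold upd; intros; destruct (Nat.eqb_spec y x); congruence. Qed.

Lemma sat_upd_fresh B x s c : ~ In x (vars_constr c) -> sat B c -> sat (upd B x s) c.
Proof.
  intros Hx; apply sat_agree; intros y Hy; symmetry; apply upd_other.
  intros ->; contradiction.
Qed.

Lemma sat_define B x e : ~ In x (vars_expr e) -> sat (upd B x (eval B e)) (ceq (EVar x) e).
Proof.
  intros Hx i; simpl; rewrite upd_same; apply eval_agree.
  intros y Hy; symmetry; apply upd_other; intros ->; contradiction.
Qed.

Lemma next_abstraction_sound B c e x1 x2 :
  Forall (sat B) [cplug c (EVar x1); ceq (EVar x2) e; ceq (EVar x1) (ENext (EVar x2))] ->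
  sat B (cplug c (ENext e)).
Proof.
  rewrite !Forall_cons_iff; intros (Hc & H2 & H1 & _).
  apply (sat_cplug_iff B c (EVar x1)); auto.
  intro i; simpl in *; rewrite H1; auto.
Qed.

Lemma next_abstraction_complete B c e x1 x2 :
  x1 <> x2 ->
  ~ In x1 (vars_constr (cplug c (ENext e))) -> ~ In x2 (vars_constr (cplug c (ENext e))) ->
  sat B (cplug c (ENext e)) ->
  exists B', (forall x, ~ In x [x1; x2] -> B' x = B x) /\
    Forall (sat B') [cplug c (EVar x1); ceq (EVar x2) e; ceq (EVar x1) (ENext (EVar x2))].
Proof.
  intros H12 F1 F2 Hc.
  assert (F1e : ~ In x1 (vars_expr e)) by (intro; apply F1, (vars_cplug c (ENext e)); auto).
  assert (F2e : ~ In x2 (vars_expr e)) by (intro; apply F2, (vars_cplug c (ENext e)); auto).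
  set (B1 := upd B x2 (eval B e)).
  set (B' := upd B1 x1 (eval B1 (ENext (EVar x2)))).
  assert (Hdef2 : sat B' (ceq (EVar x2) e)).
  { apply sat_upd_fresh; [simpl; intros [->|]; tauto | apply sat_define; auto]. }
  assert (Hdef1 : sat B' (ceq (EVar x1) (ENext (EVar x2))))
    by (apply sat_define; simpl; intros [->|]; tauto).
  exists B'; split.
  - intros x Hx; unfold B', B1; simpl in Hx; rewrite !upd_other; auto; intros ->; tauto.
  - repeat constructor; auto.
    apply (sat_cplug_iff B' c (ENext e)).
    + intro i; simpl in *; rewrite Hdef1; auto.
    + repeat (apply sat_upd_fresh; [assumption|]); assumption.
Qed.

Lemma fby_abstraction_sound B c e1 e2 x1 x2 x3 :
  Forall (sat B) [cplug c (EVar x1); ceq (EVar x2) e1; ceq (EVar x3) e2;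
                  ceq (EFirst (EVar x1)) (EFirst (EVar x2)); ceq (EVar x3) (ENext (EVar x1))] ->
  sat B (cplug c (EFby e1 e2)).
Proof.
  rewrite !Forall_cons_iff; intros (Hc & H2 & H3 & Hfirst & Hnext & _).
  apply (sat_cplug_iff B c (EVar x1)); auto.
  intros [|i]; simpl in *.
  - rewrite (Hfirst 0); auto.
  - rewrite <- Hnext; auto.
Qed.

Lemma fby_abstraction_complete B c e1 e2 x1 x2 x3 :
  x1 <> x2 -> x1 <> x3 -> x2 <> x3 ->
  ~ In x1 (vars_constr (cplug c (EFby e1 e2))) ->
  ~ In x2 (vars_constr (cplug c (EFby e1 e2))) ->
  ~ In x3 (vars_constr (cplug c (EFby e1 e2))) ->
  sat B (cplug c (EFby e1 e2)) ->
  exists B', (forall x, ~ In x [x1; x2; x3] -> B' x = B x) /\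
    Forall (sat B') [cplug c (EVar x1); ceq (EVar x2) e1; ceq (EVar x3) e2;
                     ceq (EFirst (EVar x1)) (EFirst (EVar x2)); ceq (EVar x3) (ENext (EVar x1))].
Proof.
  intros H12 H13 H23 F1 F2 F3 Hc.
  assert (Fe : forall x, ~ In x (vars_constr (cplug c (EFby e1 e2))) ->
                 ~ In x (vars_expr e1) /\ ~ In x (vars_expr e2)).
  { intros x Fx; split; intro; apply Fx, (vars_cplug c (EFby e1 e2)); simpl;
      rewrite in_app_iff; auto. }
  destruct (Fe x1 F1), (Fe x2 F2), (Fe x3 F3).
  set (B2 := upd B x2 (eval B e1)).
  set (B3 := upd B2 x3 (eval B2 e2)).
  set (B' := upd B3 x1 (eval B3 (EFby (EVar x2) (EVar x3)))).
  assert (Hdef2 : sat B' (ceq (EVar x2) e1)).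
  { do 2 (apply sat_upd_fresh; [simpl; intros [->|]; tauto|]).
    apply sat_define; auto. }
  assert (Hdef3 : sat B' (ceq (EVar x3) e2)).
  { apply sat_upd_fresh; [simpl; intros [->|]; tauto|].
    apply sat_define; auto. }
  assert (Hdef1 : sat B' (ceq (EVar x1) (EFby (EVar x2) (EVar x3)))).
  { apply sat_define; simpl; intros [->|[->|[]]]; tauto. }
  exists B'; split.
  - intros x Hx; unfold B', B3, B2; simpl in Hx; rewrite !upd_other; auto; intros ->; tauto.
  - simpl in Hdef1; repeat constructor; auto.
    + apply (sat_cplug_iff B' c (EFby e1 e2)).
      * intros [|i]; simpl in *; rewrite Hdef1; auto.
      * repeat (apply sat_upd_fresh; [assumption|]); assumption.
    + intro i; simpl; rewrite !Hdef1; auto.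
    + intro i; simpl; rewrite Hdef1; auto.
Qed.

Lemma until_abstraction_sound B e1 e2 x1 x2 :
  Forall (sat B) [ceq (EVar x1) e1; ceq (EVar x2) e2; CUntil (EVar x1) (EVar x2)] ->
  sat B (CUntil e1 e2).
Proof.
  rewrite !Forall_cons_iff; intros (H1 & H2 & [i [Hbefore Hat]] & _); simpl in *.
  exists i; rewrite <- H2; split; auto.
  intros j Hj; rewrite <- H1; auto.
Qed.

Lemma until_abstraction_complete B e1 e2 x1 x2 :
  x1 <> x2 ->
  ~ In x1 (vars_constr (CUntil e1 e2)) -> ~ In x2 (vars_constr (CUntil e1 e2)) ->
  sat B (CUntil e1 e2) ->
  exists B', (forall x, ~ In x [x1; x2] -> B' x = B x) /\
    Forall (sat B') [ceq (EVar x1) e1; ceq (EVar x2) e2; CUntil (EVar x1) (EVar x2)].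
Proof.
  simpl; rewrite !in_app_iff; intros H12 F1 F2 Hc.
  set (B' := upd (upd B x1 (eval B e1)) x2 (eval (upd B x1 (eval B e1)) e2)).
  assert (Hdef1 : sat B' (ceq (EVar x1) e1)).
  { apply sat_upd_fresh; [simpl; intros [->|]; tauto|].
    apply sat_define; tauto. }
  assert (Hdef2 : sat B' (ceq (EVar x2) e2)) by (apply sat_define; tauto).
  assert (Hold : sat B' (CUntil e1 e2)).
  { repeat (apply sat_upd_fresh; [simpl; rewrite in_app_iff; tauto|]); assumption. }
  exists B'; split.
  - intros x Hx; unfold B'; simpl in Hx; rewrite !upd_other; auto; intros ->; tauto.
  - simpl in Hdef1, Hdef2; repeat constructor; auto.
    destruct Hold as [i [Hbefore Hat]]; exists i; simpl; rewrite Hdef2; split; auto.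
    intros j Hj; rewrite Hdef1; auto.
Qed.

Definition constraints (s : rstate) : list constr := st_C0 s ++ st_C1 s.

Lemma fresh_not_in_redex X l1 c l2 C1 Y x :
  fresh X (RS (l1 ++ c :: l2) C1 Y) x -> ~ In x (vars_constr c).
Proof.
  intros (_ & _ & Fx & _) Hx; apply Fx, in_flat_map.
  exists c; split; auto; apply in_or_app; simpl; auto.
Qed.

Lemma rstep_replaces X s s' : rstep X s s' ->
  exists l1 c l2 N0 N1 xs,
    st_C0 s = l1 ++ c :: l2 /\ st_C0 s' = N0 ++ l1 ++ l2 /\ st_C1 s' = N1 ++ st_C1 s /\
    (forall x, In x xs -> fresh X s x) /\
    (forall B, Forall (sat B) (N0 ++ N1) -> sat B c) /\
    (forall B, sat B c ->
       exists B', (forall x, ~ In x xs -> B' x = B x) /\ Forall (sat B') (N0 ++ N1)).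
Proof.
  destruct 1 as [l1 l2 C1 Y c e x1 x2 s F1 F2 H12
                | l1 l2 C1 Y c e1 e2 x1 x2 x3 s F1 F2 F3 H12 H13 H23
                | l1 l2 C1 Y e1 e2 x1 x2 s F1 F2 H12].
  - exists l1, (cplug c (ENext e)), l2, [cplug c (EVar x1); ceq (EVar x2) e],
      [ceq (EVar x1) (ENext (EVar x2))], [x1; x2].
    do 3 (split; [reflexivity|]); split; [|split].
    + intros x [<-|[<-|[]]]; auto.
    + intro B; apply next_abstraction_sound.
    + intro B; apply next_abstraction_complete; eauto using fresh_not_in_redex.
  - exists l1, (cplug c (EFby e1 e2)), l2,
      [cplug c (EVar x1); ceq (EVar x2) e1; ceq (EVar x3) e2],
      [ceq (EFirst (EVar x1)) (EFirst (EVar x2)); ceq (EVar x3) (ENext (EVar x1))],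
      [x1; x2; x3].
    do 3 (split; [reflexivity|]); split; [|split].
    + intros x [<-|[<-|[<-|[]]]]; auto.
    + intro B; apply fby_abstraction_sound.
    + intro B; apply fby_abstraction_complete; eauto using fresh_not_in_redex.
  - exists l1, (CUntil e1 e2), l2, [ceq (EVar x1) e1; ceq (EVar x2) e2],
      [CUntil (EVar x1) (EVar x2)], [x1; x2].
    do 3 (split; [reflexivity|]); split; [|split].
    + intros x [<-|[<-|[]]]; auto.
    + intro B; apply until_abstraction_sound.
    + intro B; apply until_abstraction_complete; eauto using fresh_not_in_redex.
Qed.

Lemma rstep_sound X s s' B :
  rstep X s s' -> Forall (sat B) (constraints s') -> Forall (sat B) (constraints s).
Proof.
  intros Hstep; destruct (rstep_replaces X s s' Hstep)
    as (l1 & c & l2 & N0 & N1 & xs & E0 & E0' & E1' & _ & Hsound & _).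
  unfold constraints; rewrite E0, E0', E1'.
  rewrite !Forall_app, Forall_cons_iff.
  intros [[HN0 [Hl1 Hl2]] [HN1 HC1]].
  repeat split; auto.
  apply Hsound, Forall_app; auto.
Qed.

Lemma rstep_complete X s s' B :
  rstep X s s' -> Forall (sat B) (constraints s) ->
  exists B', (forall x, In x X -> B' x = B x) /\ Forall (sat B') (constraints s').
Proof.
  intros Hstep; destruct (rstep_replaces X s s' Hstep)
    as (l1 & c & l2 & N0 & N1 & xs & E0 & E0' & E1' & Hfresh & _ & Hcomplete).
  unfold constraints; rewrite E0, E0', E1'.
  rewrite !Forall_app, Forall_cons_iff; intros [[Hl1 [Hc Hl2]] HC1].
  destruct (Hcomplete B Hc) as (B' & Hagree & HN); rewrite Forall_app in HN.
  assert (Hkeep : forall L, (forall x, In x xs -> ~ In x (vars_constrs L)) ->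
                    Forall (sat B) L -> Forall (sat B') L).
  { intros L HL; apply Forall_sat_agree; intros x Hx; symmetry; apply Hagree.
    intros Hxs; exact (HL x Hxs Hx). }
  assert (Hold : forall x, In x xs ->
            ~ In x (vars_constrs (l1 ++ c :: l2)) /\ ~ In x (vars_constrs (st_C1 s))).
  { intros x Hx; destruct (Hfresh x Hx) as (_ & _ & F0 & F1); rewrite <- E0; auto. }
  assert (Hvars : forall x, In x (vars_constrs l1) \/ In x (vars_constrs l2) ->
                    In x (vars_constrs (l1 ++ c :: l2))).
  { intros x Hx; unfold vars_constrs in *; rewrite flat_map_app, in_app_iff; simpl;
      rewrite in_app_iff; tauto. }
  exists B'; split.
  - intros x HX; apply Hagree; intros Hxs; exact (proj1 (Hfresh x Hxs) HX).
  - rewrite !Forall_app; destruct HN; repeat split; auto; apply Hkeep; auto;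
      intros x Hx Hv; destruct (Hold x Hx) as [F0 F1]; auto; apply F0, Hvars; auto.
Qed.

Lemma rsteps_sound X s s' B :
  rsteps X s s' -> Forall (sat B) (constraints s') -> Forall (sat B) (constraints s).
Proof.
  induction 1; eauto using rstep_sound.
Qed.

Lemma rsteps_complete X s s' B :
  rsteps X s s' -> Forall (sat B) (constraints s) ->
  exists B', (forall x, In x X -> B' x = B x) /\ Forall (sat B') (constraints s').
Proof.
  intros Hsteps; revert B; induction Hsteps as [s s' Hstep | s | s s' s'' _ IH1 _ IH2];
    intros B HB.
  - eapply rstep_complete; eauto.
  - exists B; auto.
  - destruct (IH1 B HB) as (B1 & E1 & S1); destruct (IH2 B1 S1) as (B2 & E2 & S2).
    exists B2; split; auto; intros x Hx; rewrite E2, E1; auto.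
Qed.

Theorem proposition3 (P : stcsp) (C0 C1 : list constr) (Y : list var) :
  well_formed P ->
  rsteps (csp_X P) (RS (csp_C P) nil nil) (RS C0 C1 Y) ->
  forall A : assignment,
    is_sol P A <->
    exists A' : assignment,
      (forall x, In x (csp_X P) -> A' x = A x) /\
      is_sol_P' P Y (C0 ++ C1) A'.
Proof.
  intros WF Hsteps A.
  assert (Hinit : forall B, Forall (sat B) (constraints (RS (csp_C P) nil nil)) <->
                            (forall c, In c (csp_C P) -> sat B c))
    by (intros; unfold constraints; simpl; rewrite app_nil_r, Forall_forall; tauto).
  split.
  - intros [Hdom Hsat].
    destruct (rsteps_complete _ _ _ A Hsteps) as (A' & Hagree & HA'); [apply Hinit; auto|].
    exists A'; repeat split; auto.
    + intros x Hx; rewrite Hagree; auto.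
    + apply Forall_forall, HA'.
  - intros (A' & Hagree & Hdom & Hsat); split.
    + intros x Hx; rewrite <- Hagree; auto.
    + intros c Hc; apply (sat_agree A').
      * intros x Hx; apply Hagree, WF, in_flat_map; eauto.
      * apply (Hinit A'); auto.
        apply (rsteps_sound _ _ _ A' Hsteps), Forall_forall, Hsat.
Qed.
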